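(* Let $q\in\mathbb{C}\setminus\{0\}$ with $|q|\ne1$, $n\in\mathbb{N}$, $r\in(0,+\infty]$. Then $\mathcal{O}_q(\mathbb{D}_r^n)=\mathcal{O}_q(\mathbb{B}_r^n)$ as subspaces of the space of formal series $\sum_{k\in\mathbb{Z}_+^n}c_kx^k$ and as Fréchet algebras. Moreover, for each $\rho\in(0,r)$, on this algebra $$(|q|^{-2};|q|^{-2})_\infty^{n/2}\,\|\cdot\|_{\mathbb{D},\rho}\le\|\cdot\|_{\mathbb{B},\rho}\le\|\cdot\|_{\mathbb{D},\rho}\quad\text{if }|q|>1,$$ $$(|q|^{2};|q|^{2})_\infty^{n/2}\,\|\cdot\|_{\mathbb{D},\rho}\le\|\cdot\|_{\mathbb{B},\rho}\le\|\cdot\|_{\mathbb{D},\rho}\quad\text{if }|q|<1.$$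
   Context: $\mathcal{O}_q^{\mathrm{reg}}(\mathbb{C}^n)$: algebra generated by $x_1,\dots,x_n$ with $x_ix_j=qx_jx_i$ ($i<j$); basis $x^k=x_1^{k_1}\cdots x_n^{k_n}$, $k\in\mathbb{Z}_+^n$. Put $w_q(k)=1$ if $|q|\ge1$ and $w_q(k)=|q|^{\sum_{i<j}k_ik_j}$ if $|q|<1$; $u_q(k)=|q|^{\sum_{i<j}k_ik_j}$; $[m]_q=1+\dots+q^{m-1}$, $[m]_q!=[1]_q\cdots[m]_q$, $[0]_q!=1$, $[k]_q!=\prod_i[k_i]_q!$, $|k|=\sum k_i$; $(a;t)_\infty=\prod_{j\ge0}(1-at^j)$ for $|t|<1$. For $f=\sum_kc_kx^k$: $\|f\|_{\mathbb{D},\rho}=\sum_k|c_k|w_q(k)\rho^{|k|}$ and $\|f\|_{\mathbb{B},\rho}=\sum_k|c_k|\big([k]_{|q|^2}!/[|k|]_{|q|^2}!\big)^{1/2}u_q(k)\rho^{|k|}$. $\mathcal{O}_q(\mathbb{D}_r^n)$ (resp. $\mathcal{O}_q(\mathbb{B}_r^n)$) is the completion of $\mathcal{O}_q^{\mathrm{reg}}(\mathbb{C}^n)$ with respect to the submultiplicative norms $\|\cdot\|_{\mathbb{D},\rho}$ (resp. $\|\cdot\|_{\mathbb{B},\rho}$), $\rho\in(0,r)$; concretely it is the Fréchet algebra of formal series $\sum_kc_kx^k$ with all these norms finite, with multiplication extending that of $\mathcal{O}_q^{\mathrm{reg}}(\mathbb{C}^n)$. *)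

From Stdlib Require Import Reals ClassicalEpsilon.
Open Scope R_scope.

Definition Cplx := (R * R)%type.
Definition Cmod (z : Cplx) : R := sqrt (fst z ^ 2 + snd z ^ 2).

(* Multi-indices k in Z_+^n are represented by k : nat -> nat, of which only
   k 0, ..., k (n-1) are relevant (box sums only evaluate at k with k i = 0 for i >= n). *)
Definition multi := nat -> nat.

Definition fseries := multi -> Cplx.

Definition cons_idx (j : nat) (k : multi) : multi :=
  fun i => match i with O => j | S i' => k i' end.

(* sum of F k over the box {k in Z_+^n : k_i <= N for all i < n} *)
Fixpoint box_sum (n : nat) (F : multi -> R) (N : nat) : R :=
  match n with
  | O => F (fun _ => O)
  | S m => sum_f_R0 (fun j => box_sum m (fun k => F (cons_idx j k)) N) N
  end.

Fixpoint nsum (m : nat) (f : nat -> nat) : nat :=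
  match m with O => O | S m' => (nsum m' f + f m')%nat end.

Definition absk (n : nat) (k : multi) : nat := nsum n k.
Definition cross (n : nat) (k : multi) : nat :=
  nsum n (fun j => nsum j (fun i => (k i * k j)%nat)).

Fixpoint rsum (m : nat) (f : nat -> R) : R :=
  match m with O => 0 | S m' => rsum m' f + f m' end.
Fixpoint rprod (m : nat) (f : nat -> R) : R :=
  match m with O => 1 | S m' => rprod m' f * f m' end.

Definition qint (t : R) (m : nat) : R := rsum m (fun i => t ^ i).
Fixpoint qfact (t : R) (m : nat) : R :=
  match m with O => 1 | S m' => qfact t m' * qint t (S m') end.
Definition qfact_multi (t : R) (n : nat) (k : multi) : R :=
  rprod n (fun i => qfact t (k i)).

Definition wq (q : Cplx) (n : nat) (k : multi) : R :=
  if Rle_dec 1 (Cmod q) then 1 else Cmod q ^ cross n k.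
Definition uq (q : Cplx) (n : nat) (k : multi) : R := Cmod q ^ cross n k.

Definition termD (q : Cplx) (n : nat) (c : fseries) (rho : R) (k : multi) : R :=
  Cmod (c k) * wq q n k * rho ^ absk n k.
Definition termB (q : Cplx) (n : nat) (c : fseries) (rho : R) (k : multi) : R :=
  let t := Cmod q ^ 2 in
  Cmod (c k) * sqrt (qfact_multi t n k / qfact t (absk n k)) * uq q n k
    * rho ^ absk n k.

(* A series of nonnegative terms over Z_+^n: finite iff box partial sums are bounded;
   its value is the supremum of the box partial sums. *)
Definition sum_finite (n : nat) (F : multi -> R) : Prop :=
  exists M, forall N, box_sum n F N <= M.
Definition sum_value (n : nat) (F : multi -> R) : R :=
  epsilon (inhabits 0) (fun l => is_lub (fun x => exists N, x = box_sum n F N) l).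

Definition normD q n c rho := sum_value n (termD q n c rho).
Definition normB q n c rho := sum_value n (termB q n c rho).

(* r in (0, +oo]: None = +oo *)
Definition ext_pos (r : option R) : Prop :=
  match r with Some r' => 0 < r' | None => True end.
Definition below (r : option R) (rho : R) : Prop :=
  match r with Some r' => rho < r' | None => True end.

Definition in_OD (q : Cplx) (n : nat) (r : option R) (c : fseries) : Prop :=
  forall rho, 0 < rho -> below r rho -> sum_finite n (termD q n c rho).
Definition in_OB (q : Cplx) (n : nat) (r : option R) (c : fseries) : Prop :=
  forall rho, 0 < rho -> below r rho -> sum_finite n (termB q n c rho).

Definition qpoch_inf (a t : R) : R :=
  epsilon (inhabits 0)
    (fun l => Un_cv (fun N => rprod (S N) (fun j => 1 - a * t ^ j)) l).

(* Writing s = |q|^2 when |q| < 1 and s = |q|^-2 when |q| > 1, the two norms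
   differ termwise by the factor sqrt([k]_s! / [|k|]_s!) (for |q| > 1 the
   identity [m]_t! = t^(m(m-1)/2) [m]_(1/t)! absorbs the weight u_q(k)).
   Multiplying by (1 - s)^|k| turns this ratio into a quotient of finite
   q-Pochhammer symbols prod_i (s;s)_(k_i) / (s;s)_|k|, which lies between
   (s;s)_oo^n and 1, because (s;s)_m decreases in m to (s;s)_oo > 0.
   Termwise comparison of nonnegative series then gives both statements. *)

From Stdlib Require Import Reals Lra Lia ClassicalEpsilon FunctionalExtensionality.
Open Scope R_scope.

Lemma pow_le_one (x : R) (m : nat) : 0 <= x <= 1 -> x ^ m <= 1.
Proof.
  intros Hx; induction m as [|m IH]; simpl; [lra|].
  pose proof (pow_le x m ltac:(lra)); nra.
Qed.

Lemma rprod_ge_pow (n : nat) (f : nat -> R) (P : R) :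
  0 <= P -> (forall i, P <= f i) -> P ^ n <= rprod n f.
Proof.
  intros HP Hf; induction n as [|n IH]; simpl; [lra|].
  rewrite Rmult_comm; apply Rmult_le_compat; auto; apply pow_le; auto.
Qed.

(** * q-integers and q-factorials *)

Lemma qint_S (t : R) (m : nat) : qint t (S m) = qint t m + t ^ m.
Proof. reflexivity. Qed.

Lemma qint_S_shift (t : R) (m : nat) : qint t (S m) = 1 + t * qint t m.
Proof.
  induction m as [|m IH]; [unfold qint; simpl; ring|].
  rewrite (qint_S t (S m)), IH at 1; rewrite (qint_S t m); simpl; ring.
Qed.

Lemma qint_mul_one_sub (s : R) (m : nat) : qint s m * (1 - s) = 1 - s ^ m.
Proof.
  induction m as [|m IH]; unfold qint in *; simpl; [ring|].
  rewrite Rmult_plus_distr_r, IH; ring.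
Qed.

Lemma qint_S_ge1 (s : R) (m : nat) : 0 <= s -> 1 <= qint s (S m).
Proof.
  intros Hs; induction m as [|m IH]; [unfold qint; simpl; lra|].
  rewrite qint_S; pose proof (pow_le s (S m) Hs); lra.
Qed.

Lemma qint_le (s : R) (a b : nat) : 0 <= s -> (a <= b)%nat -> qint s a <= qint s b.
Proof.
  intros Hs Hab; induction Hab as [|b _ IH]; [lra|].
  rewrite qint_S; pose proof (pow_le s b Hs); lra.
Qed.

Lemma qfact_pos (s : R) (m : nat) : 0 <= s -> 0 < qfact s m.
Proof.
  intros Hs; induction m as [|m IH]; simpl; [lra|].
  pose proof (qint_S_ge1 s m Hs); nra.
Qed.

Lemma qfact_mul_le_qfact_add (s : R) (a b : nat) :
  0 <= s -> qfact s a * qfact s b <= qfact s (a + b).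
Proof.
  intros Hs; induction b as [|b IH].
  - rewrite Nat.add_0_r; simpl; lra.
  - rewrite Nat.add_succ_r; simpl.
    pose proof (qfact_pos s a Hs); pose proof (qfact_pos s (a + b) Hs).
    pose proof (qint_le s (S b) (S (a + b)) Hs ltac:(lia)).
    pose proof (qint_S_ge1 s b Hs).
    apply Rle_trans with (qfact s (a + b) * qint s (S b)).
    + rewrite <- Rmult_assoc; apply Rmult_le_compat_r; lra.
    + apply Rmult_le_compat_l; lra.
Qed.

Lemma qfact_multi_pos (s : R) (n : nat) (k : multi) : 0 <= s -> 0 < qfact_multi s n k.
Proof.
  intros Hs; induction n as [|n IH]; unfold qfact_multi in *; simpl; [lra|].
  pose proof (qfact_pos s (k n) Hs); nra.
Qed.

Lemma qfact_multi_le_qfact_absk (s : R) (n : nat) (k : multi) :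
  0 <= s -> qfact_multi s n k <= qfact s (absk n k).
Proof.
  intros Hs; induction n as [|n IH]; unfold qfact_multi, absk in *; simpl; [lra|].
  apply Rle_trans with (qfact s (nsum n k) * qfact s (k n)).
  - apply Rmult_le_compat_r; [left; apply qfact_pos|]; auto.
  - apply qfact_mul_le_qfact_add; auto.
Qed.

(** * Finite q-Pochhammer symbols *)

(* [qpoch s m] is (s;s)_m; its values at [S N] are the partial products in [qpoch_inf s s]. *)
Definition qpoch (s : R) (m : nat) : R := rprod m (fun j => 1 - s * s ^ j).

Lemma qpoch_S (s : R) (m : nat) : qpoch s (S m) = qpoch s m * (1 - s * s ^ m).
Proof. reflexivity. Qed.

Lemma qfact_mul_pow_one_sub (s : R) (m : nat) : qfact s m * (1 - s) ^ m = qpoch s m.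
Proof.
  induction m as [|m IH]; [unfold qpoch; simpl; ring|].
  rewrite qpoch_S, <- IH; simpl qfact.
  replace (1 - s * s ^ m) with (qint s (S m) * (1 - s)) by (rewrite qint_mul_one_sub; simpl; ring).
  simpl; ring.
Qed.

Lemma qfact_multi_mul_pow_one_sub (s : R) (n : nat) (k : multi) :
  qfact_multi s n k * (1 - s) ^ absk n k = rprod n (fun i => qpoch s (k i)).
Proof.
  induction n as [|n IH]; unfold qfact_multi, absk in *; simpl; [ring|].
  rewrite <- IH, <- (qfact_mul_pow_one_sub s (k n)), pow_add; ring.
Qed.

Lemma qpoch_factor_bounds (s : R) (m : nat) : 0 <= s < 1 -> 0 <= s * s ^ m <= s.
Proof.
  intros Hs; pose proof (pow_le s m ltac:(lra)); pose proof (pow_le_one s m ltac:(lra)).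
  split; nra.
Qed.

Lemma qpoch_pos_le1 (s : R) (m : nat) : 0 <= s < 1 -> 0 < qpoch s m <= 1.
Proof.
  intros Hs; induction m as [|m IH]; [unfold qpoch; simpl; lra|].
  rewrite qpoch_S; pose proof (qpoch_factor_bounds s m Hs); nra.
Qed.

Lemma qpoch_S_le (s : R) (m : nat) : 0 <= s < 1 -> qpoch s (S m) <= qpoch s m.
Proof.
  intros Hs; rewrite qpoch_S.
  pose proof (qpoch_pos_le1 s m Hs); pose proof (qpoch_factor_bounds s m Hs); nra.
Qed.

(* From 1 + y <= exp y with y = x / (1 - s): (1 - x)(1 + x/(1-s)) - 1 = x (s - x)/(1 - s) >= 0. *)
Lemma exp_neg_div_le_one_sub (s x : R) :
  0 <= x <= s -> s < 1 -> exp (- (x / (1 - s))) <= 1 - x.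
Proof.
  intros Hx Hs.
  assert (Hprod : 1 <= (1 - x) * exp (x / (1 - s))).
  { pose proof (exp_ineq1_le (x / (1 - s))).
    assert (1 <= (1 - x) * (1 + x / (1 - s))).
    { assert (E : (1 - x) * (1 + x / (1 - s)) - 1 = x * (s - x) / (1 - s)) by (field; lra).
      assert (0 <= x * (s - x) / (1 - s)) by (apply Rmult_le_pos; [nra | left; apply Rinv_0_lt_compat; lra]).
      lra. }
    nra. }
  rewrite exp_Ropp.
  pose proof (exp_pos (x / (1 - s))).
  apply Rmult_le_reg_r with (exp (x / (1 - s))); [lra|].
  rewrite Rinv_l by lra; lra.
Qed.

Lemma qpoch_ge_exp (s : R) (m : nat) :
  0 <= s < 1 -> exp (- (s / (1 - s) / (1 - s))) <= qpoch s m.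
Proof.
  intros Hs.
  (* (s - s^(m+1)) / (1 - s) = sum_(j<m) s^(j+1), one term per factor of (s;s)_m. *)
  assert (Hpartial : exp (- ((s - s * s ^ m) / (1 - s) / (1 - s))) <= qpoch s m).
  { induction m as [|m IH].
    - unfold qpoch; simpl; replace (s - s * 1) with 0 by ring.
      rewrite !Rdiv_0_l, Ropp_0, exp_0; lra.
    - rewrite qpoch_S.
      pose proof (qpoch_factor_bounds s m Hs).
      replace (- ((s - s * s ^ S m) / (1 - s) / (1 - s))) with
        (- ((s - s * s ^ m) / (1 - s) / (1 - s)) + - (s * s ^ m / (1 - s)))
        by (simpl; field; lra).
      rewrite exp_plus.
      pose proof (exp_neg_div_le_one_sub s (s * s ^ m) ltac:(lra) ltac:(lra)).
      apply Rmult_le_compat; try (left; apply exp_pos); lra. }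
  eapply Rle_trans; [|exact Hpartial].
  assert (Hle : (s - s * s ^ m) / (1 - s) / (1 - s) <= s / (1 - s) / (1 - s)).
  { pose proof (qpoch_factor_bounds s m Hs).
    unfold Rdiv; apply Rmult_le_compat_r; [left; apply Rinv_0_lt_compat; lra|].
    apply Rmult_le_compat_r; [left; apply Rinv_0_lt_compat; lra|lra]. }
  destruct (Rle_lt_or_eq_dec _ _ Hle) as [Hlt|Heq]; [|rewrite Heq; lra].
  left; apply exp_increasing; lra.
Qed.

Lemma Un_cv_const (c : R) : Un_cv (fun _ => c) c.
Proof.
  intros e He; exists 0%nat; intros N _.
  unfold Rdist; rewrite Rminus_diag, Rabs_R0; lra.
Qed.

Lemma qpoch_inf_spec (s : R) :
  0 <= s < 1 -> 0 < qpoch_inf s s /\ forall m, qpoch_inf s s <= qpoch s m.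
Proof.
  intros Hs.
  set (u := fun N => qpoch s (S N)).
  assert (Hdec : Un_decreasing u) by (intro N; apply qpoch_S_le; exact Hs).
  assert (Hlb : has_lb u).
  { exists 0; intros x [N ->]; unfold opp_seq, u.
    pose proof (qpoch_pos_le1 s (S N) Hs); lra. }
  assert (Hcv : Un_cv u (qpoch_inf s s)).
  { destruct (decreasing_cv u Hdec Hlb) as [l Hl].
    unfold qpoch_inf; apply epsilon_spec; exists l; exact Hl. }
  split.
  - apply Rlt_le_trans with (exp (- (s / (1 - s) / (1 - s)))); [apply exp_pos|].
    apply (Rle_cv_lim (fun N => qpoch_ge_exp s (S N) Hs) (Un_cv_const _) Hcv).
  - intros [|m].
    + pose proof (decreasing_ineq u _ Hdec Hcv 0); pose proof (qpoch_S_le s 0 Hs).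
      unfold u in *; lra.
    + exact (decreasing_ineq u _ Hdec Hcv m).
Qed.

(** * The ratio [k]_s! / [|k|]_s! *)

Definition inv_qmultinomial (s : R) (n : nat) (k : multi) : R :=
  qfact_multi s n k / qfact s (absk n k).

Lemma inv_qmultinomial_pos (s : R) (n : nat) (k : multi) :
  0 <= s -> 0 < inv_qmultinomial s n k.
Proof.
  intros Hs; unfold inv_qmultinomial.
  pose proof (qfact_multi_pos s n k Hs); pose proof (qfact_pos s (absk n k) Hs).
  apply Rdiv_lt_0_compat; lra.
Qed.

Lemma inv_qmultinomial_le1 (s : R) (n : nat) (k : multi) :
  0 <= s -> inv_qmultinomial s n k <= 1.
Proof.
  intros Hs; unfold inv_qmultinomial.
  pose proof (qfact_multi_le_qfact_absk s n k Hs); pose proof (qfact_pos s (absk n k) Hs).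
  apply Rmult_le_reg_r with (qfact s (absk n k)); [lra|].
  unfold Rdiv; rewrite Rmult_assoc, Rinv_l by lra; lra.
Qed.

Lemma inv_qmultinomial_qpoch (s : R) (n : nat) (k : multi) : 0 <= s < 1 ->
  inv_qmultinomial s n k = rprod n (fun i => qpoch s (k i)) / qpoch s (absk n k).
Proof.
  intros Hs; unfold inv_qmultinomial.
  rewrite <- qfact_multi_mul_pow_one_sub, <- qfact_mul_pow_one_sub.
  pose proof (qfact_pos s (absk n k) ltac:(lra)).
  assert ((1 - s) ^ absk n k <> 0) by (apply pow_nonzero; lra).
  field; lra.
Qed.

Lemma inv_qmultinomial_ge (s : R) (n : nat) (k : multi) : 0 <= s < 1 ->
  qpoch_inf s s ^ n <= inv_qmultinomial s n k.
Proof.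
  intros Hs; destruct (qpoch_inf_spec s Hs) as [Hpos Hle].
  rewrite inv_qmultinomial_qpoch by exact Hs.
  pose proof (qpoch_pos_le1 s (absk n k) Hs).
  pose proof (rprod_ge_pow n (fun i => qpoch s (k i)) (qpoch_inf s s) ltac:(lra)
    (fun i => Hle (k i))) as Hprod.
  apply Rle_trans with (rprod n (fun i => qpoch s (k i))); [exact Hprod|].
  apply Rmult_le_reg_r with (qpoch s (absk n k)); [lra|].
  unfold Rdiv; rewrite Rmult_assoc, Rinv_l by lra.
  pose proof (pow_le (qpoch_inf s s) n ltac:(lra)); nra.
Qed.

Lemma sqrt_inv_qmultinomial_bounds (s : R) (n : nat) (k : multi) : 0 <= s < 1 ->
  Rpower (qpoch_inf s s) (INR n / 2) <= sqrt (inv_qmultinomial s n k) <= 1.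
Proof.
  intros Hs; destruct (qpoch_inf_spec s Hs) as [Hpos _].
  split.
  - unfold Rdiv; rewrite <- Rpower_mult, Rpower_pow, Rpower_sqrt by (auto; apply pow_lt; auto).
    apply sqrt_le_1_alt, inv_qmultinomial_ge, Hs.
  - rewrite <- sqrt_1; apply sqrt_le_1_alt, inv_qmultinomial_le1; lra.
Qed.

(** * Passing from t to 1/t *)

(* [tri m] = m(m-1)/2, the exponent in [m]_t! = t^(m(m-1)/2) [m]_(1/t)!. *)
Definition tri (m : nat) : nat := nsum m (fun i => i).

Lemma tri_add (a b : nat) : tri (a + b) = (tri a + tri b + a * b)%nat.
Proof.
  induction b as [|b IH]; [rewrite Nat.add_0_r, Nat.mul_0_r; change (tri 0) with 0%nat; lia|].
  rewrite Nat.add_succ_r; unfold tri in *; simpl; rewrite IH; lia.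
Qed.

Lemma nsum_mulr (n c : nat) (k : multi) :
  nsum n (fun i => (k i * c)%nat) = (nsum n k * c)%nat.
Proof. induction n as [|n IH]; simpl; lia. Qed.

Lemma tri_absk (n : nat) (k : multi) :
  tri (absk n k) = (nsum n (fun i => tri (k i)) + cross n k)%nat.
Proof.
  induction n as [|n IH]; unfold absk, cross in *; simpl; [reflexivity|].
  rewrite tri_add, IH, nsum_mulr; lia.
Qed.

Section Inversion.

Variables (s t : R).
Hypothesis Hst : s * t = 1.

Lemma qint_inv (m : nat) : qint t (S m) = t ^ m * qint s (S m).
Proof.
  induction m as [|m IH]; [unfold qint; simpl; ring|].
  rewrite (qint_S s (S m)), (qint_S_shift t (S m)), IH.
  replace (t ^ S m * (qint s (S m) + s ^ S m))
    with (t * (t ^ m * qint s (S m)) + (s * t) ^ S m)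
    by (rewrite Rpow_mult_distr; simpl; ring).
  rewrite Hst, pow1; ring.
Qed.

Lemma qfact_inv (m : nat) : qfact t m = t ^ tri m * qfact s m.
Proof.
  induction m as [|m IH]; simpl; [ring|].
  rewrite IH, qint_inv; unfold tri; simpl nsum; rewrite pow_add; ring.
Qed.

Lemma qfact_multi_inv (n : nat) (k : multi) :
  qfact_multi t n k = t ^ nsum n (fun i => tri (k i)) * qfact_multi s n k.
Proof.
  induction n as [|n IH]; unfold qfact_multi in *; simpl; [ring|].
  rewrite IH, qfact_inv, pow_add; ring.
Qed.

Lemma inv_qmultinomial_inv (n : nat) (k : multi) : 0 <= s -> 0 < t ->
  inv_qmultinomial t n k * t ^ cross n k = inv_qmultinomial s n k.
Proof.
  intros Hs Ht; unfold inv_qmultinomial.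
  rewrite qfact_multi_inv, qfact_inv, tri_absk, pow_add.
  pose proof (qfact_pos s (absk n k) Hs).
  assert (t ^ nsum n (fun i => tri (k i)) <> 0) by (apply pow_nonzero; lra).
  assert (t ^ cross n k <> 0) by (apply pow_nonzero; lra).
  field; repeat split; lra.
Qed.

End Inversion.

(** * Comparison of series of nonnegative terms *)

Lemma sum_f_R0_le (f g : nat -> R) (N : nat) :
  (forall i, f i <= g i) -> sum_f_R0 f N <= sum_f_R0 g N.
Proof. intros H; induction N as [|N IH]; simpl; [apply H|]; pose proof (H (S N)); lra. Qed.

Lemma sum_f_R0_scal (f : nat -> R) (C : R) (N : nat) :
  sum_f_R0 (fun i => C * f i) N = C * sum_f_R0 f N.
Proof. induction N as [|N IH]; simpl; [|rewrite IH]; ring. Qed.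

Lemma box_sum_le (n : nat) : forall (F G : multi -> R) (N : nat),
  (forall k, F k <= G k) -> box_sum n F N <= box_sum n G N.
Proof.
  induction n as [|n IH]; intros F G N H; simpl; [apply H|].
  apply sum_f_R0_le; intros j; apply IH; intros k; apply H.
Qed.

Lemma box_sum_scal (n : nat) : forall (F : multi -> R) (C : R) (N : nat),
  box_sum n (fun k => C * F k) N = C * box_sum n F N.
Proof.
  induction n as [|n IH]; intros F C N; simpl; [reflexivity|].
  rewrite <- sum_f_R0_scal; f_equal.
  apply functional_extensionality; intros j; apply (IH (fun k => F (cons_idx j k))).
Qed.

Lemma sum_value_is_lub (n : nat) (F : multi -> R) : sum_finite n F ->
  is_lub (fun x => exists N, x = box_sum n F N) (sum_value n F).
Proof.
  intros [M HM]; unfold sum_value; apply epsilon_spec.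
  destruct (completeness (fun x => exists N, x = box_sum n F N)) as [l Hl].
  - exists M; intros x [N ->]; apply HM.
  - exists (box_sum n F 0); exists 0%nat; reflexivity.
  - exists l; exact Hl.
Qed.

Section Comparison.

Variables (n : nat) (F G : multi -> R) (C : R).
Hypothesis HC : 0 < C.
Hypothesis HFG : forall k, C * F k <= G k <= F k.

Lemma box_sum_compare (N : nat) :
  C * box_sum n F N <= box_sum n G N <= box_sum n F N.
Proof.
  rewrite <- box_sum_scal; split; apply box_sum_le; intros k; apply HFG.
Qed.

Lemma sum_finite_compare : sum_finite n F <-> sum_finite n G.
Proof.
  split; intros [M HM].
  - exists M; intros N; pose proof (box_sum_compare N); pose proof (HM N); lra.
  - exists (M / C); intros N; pose proof (box_sum_compare N); pose proof (HM N).
    apply Rmult_le_reg_l with C; [exact HC|].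
    replace (C * (M / C)) with M by (field; lra); lra.
Qed.

Lemma sum_value_compare : sum_finite n F ->
  C * sum_value n F <= sum_value n G /\ sum_value n G <= sum_value n F.
Proof.
  intros HF; pose proof (proj1 sum_finite_compare HF) as HG.
  destruct (sum_value_is_lub n F HF) as [UF LF].
  destruct (sum_value_is_lub n G HG) as [UG LG].
  split.
  - assert (sum_value n F <= sum_value n G / C).
    { apply LF; intros x [N ->].
      assert (box_sum n G N <= sum_value n G) by (apply UG; exists N; reflexivity).
      pose proof (box_sum_compare N).
      apply Rmult_le_reg_l with C; [exact HC|].
      replace (C * (sum_value n G / C)) with (sum_value n G) by (field; lra); lra. }
    apply Rmult_le_compat_l with (r := C) in H; [|lra].
    replace (C * (sum_value n G / C)) with (sum_value n G) in H by (field; lra); lra.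
  - apply LG; intros x [N ->].
    assert (box_sum n F N <= sum_value n F) by (apply UF; exists N; reflexivity).
    pose proof (box_sum_compare N); lra.
Qed.

End Comparison.

(** * The two norms *)

Lemma Cmod_nonneg (z : Cplx) : 0 <= Cmod z.
Proof. apply sqrt_pos. Qed.

Lemma termD_nonneg (q : Cplx) (n : nat) (c : fseries) (rho : R) (k : multi) :
  0 < rho -> 0 <= termD q n c rho k.
Proof.
  intros Hrho; unfold termD, wq.
  pose proof (Cmod_nonneg (c k)); pose proof (Cmod_nonneg q).
  pose proof (pow_le rho (absk n k) ltac:(lra)).
  destruct (Rle_dec 1 (Cmod q)); repeat apply Rmult_le_pos; try apply pow_le; lra.
Qed.

Lemma termB_lt1 (q : Cplx) (n : nat) (c : fseries) (rho : R) (k : multi) :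
  Cmod q < 1 ->
  termB q n c rho k = sqrt (inv_qmultinomial (Cmod q ^ 2) n k) * termD q n c rho k.
Proof.
  intros Hq; unfold termB, termD, wq, uq, inv_qmultinomial.
  destruct (Rle_dec 1 (Cmod q)); [lra|ring].
Qed.

Lemma termB_gt1 (q : Cplx) (n : nat) (c : fseries) (rho : R) (k : multi) :
  1 < Cmod q ->
  termB q n c rho k = sqrt (inv_qmultinomial (/ (Cmod q ^ 2)) n k) * termD q n c rho k.
Proof.
  intros Hq; unfold termB, termD, wq, uq; destruct (Rle_dec 1 (Cmod q)) as [_|]; [|lra].
  set (t := Cmod q ^ 2).
  assert (Ht : 1 < t) by (unfold t; simpl; nra).
  rewrite <- (inv_qmultinomial_inv (/ t) t) by
    (try apply Rinv_l; try (left; apply Rinv_0_lt_compat); lra).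
  unfold t; rewrite <- pow_mult, Nat.mul_comm, pow_mult.
  pose proof (inv_qmultinomial_pos (Cmod q ^ 2) n k ltac:(nra)).
  rewrite sqrt_mult_alt, sqrt_pow2 by (try apply pow_le; try apply Cmod_nonneg; lra).
  unfold inv_qmultinomial; ring.
Qed.

Lemma norms_compare (q : Cplx) (n : nat) (r : option R) (s : R) : 0 <= s < 1 ->
  (forall c rho k, termB q n c rho k = sqrt (inv_qmultinomial s n k) * termD q n c rho k) ->
  (forall c, in_OD q n r c <-> in_OB q n r c) /\
  (forall c rho, in_OD q n r c -> 0 < rho -> below r rho ->
     Rpower (qpoch_inf s s) (INR n / 2) * normD q n c rho <= normB q n c rho
     /\ normB q n c rho <= normD q n c rho).
Proof.
  intros Hs HB.
  set (C := Rpower (qpoch_inf s s) (INR n / 2)).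
  assert (HC : 0 < C) by (unfold C, Rpower; apply exp_pos).
  assert (Hterm : forall c rho, 0 < rho -> forall k,
    C * termD q n c rho k <= termB q n c rho k <= termD q n c rho k).
  { intros c rho Hrho k; rewrite HB.
    pose proof (termD_nonneg q n c rho k Hrho).
    pose proof (sqrt_inv_qmultinomial_bounds s n k Hs) as Hratio; fold C in Hratio.
    split; nra. }
  split.
  - intros c; split; intros H rho Hrho Hbelow;
      apply (sum_finite_compare n _ _ C HC (Hterm c rho Hrho)); auto.
  - intros c rho H Hrho Hbelow.
    exact (sum_value_compare n _ _ C HC (Hterm c rho Hrho) (H rho Hrho Hbelow)).
Qed.

Theorem theorem4p2 (q : Cplx) (n : nat) (r : option R)
  (hq0 : q <> (0, 0)) (hq1 : Cmod q <> 1) (hr : ext_pos r) :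
  (forall c : fseries, in_OD q n r c <-> in_OB q n r c) /\
  (forall (c : fseries) (rho : R), in_OD q n r c -> 0 < rho -> below r rho ->
     (1 < Cmod q ->
        Rpower (qpoch_inf (/ (Cmod q ^ 2)) (/ (Cmod q ^ 2))) (INR n / 2)
          * normD q n c rho <= normB q n c rho
        /\ normB q n c rho <= normD q n c rho) /\
     (Cmod q < 1 ->
        Rpower (qpoch_inf (Cmod q ^ 2) (Cmod q ^ 2)) (INR n / 2)
          * normD q n c rho <= normB q n c rho
        /\ normB q n c rho <= normD q n c rho)).
Proof.
  pose proof (Cmod_nonneg q) as Hq.
  destruct (Rtotal_order (Cmod q) 1) as [Hlt|[Heq|Hgt]]; [| lra |].
  - assert (Hs : 0 <= Cmod q ^ 2 < 1) by (simpl; split; nra).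
    destruct (norms_compare q n r _ Hs (fun c rho k => termB_lt1 q n c rho k Hlt))
      as [Hspace Hnorms].
    split; [exact Hspace|].
    intros c rho Hc Hrho Hbelow; split; [lra|auto].
  - assert (Hs : 0 <= / (Cmod q ^ 2) < 1).
    { assert (1 < Cmod q ^ 2) by (simpl; nra); split.
      + left; apply Rinv_0_lt_compat; lra.
      + rewrite <- Rinv_1; apply Rinv_lt_contravar; lra. }
    destruct (norms_compare q n r _ Hs (fun c rho k => termB_gt1 q n c rho k Hgt))
      as [Hspace Hnorms].
    split; [exact Hspace|].
    intros c rho Hc Hrho Hbelow; split; [auto|lra].
Qed.
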